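(* If $G$ is a $\gamma_{\rm tg}$-critical graph and $v$ is any vertex of $G$, then no neighbor of $v$ is an optimal first move of Dominator in the Dominator-start total domination game on $G|v$.
   Context: Total domination game on a graph without isolated vertices: Dominator and Staller alternately choose vertices, each chosen vertex must be adjacent to some vertex not yet totally dominated (vertices declared totally dominated count as totally dominated); the game ends when no legal move exists; Dominator minimizes, Staller maximizes the number of moves. For $S\subseteq V(G)$, $G|S$ is $G$ with the vertices of $S$ declared already totally dominated; $\gamma_{\rm tg}(G|S)$ and $\gamma'_{\rm tg}(G|S)$ are the optimal numbers of moves when Dominator, respectively Staller, moves first; $\gamma_{\rm tg}(G)=\gamma_{\rm tg}(G|\emptyset)$, $G|v=G|\{v\}$. A vertex $d$ is an optimal first move of Dominator on $G|v$ if it is a legal move and $\gamma_{\rm tg}(G|v)=1+\gamma'_{\rm tg}(G|(\{v\}\cup N(d)))$. $G$ is $\gamma_{\rm tg}$-critical if $\gamma_{\rm tg}(G|v)<\gamma_{\rm tg}(G)$ for every vertex $v$. *)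

From mathcomp Require Import all_boot.
Set Implicit Arguments. Unset Strict Implicit. Unset Printing Implicit Defensive.

Definition simple_graph_noiso (T : finType) (e : rel T) : Prop :=
  symmetric e /\ irreflexive e /\ (forall v : T, exists u : T, e v u).

Definition nbh (T : finType) (e : rel T) (u : T) : {set T} := [set w | e u w].

(* A game position is described by the set D of vertices that are already
   totally dominated (declared ones plus neighbours of chosen vertices).  Each legal move adds a new vertex to D, so fuel
   #|T| suffices and every value is <= #|T|; hence #|T| is a neutral
   element for the minimum over a nonempty set of moves. *)
Fixpoint gval (T : finType) (e : rel T) (n : nat) (D : {set T}) (dom : bool)
  : nat :=
  match n with
  | 0 => 0
  | n'.+1 =>
    let moves := [set u | ~~ (nbh e u \subset D)] in
    if moves == set0 then 0 else
    if dom then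
      (\big[minn/#|T|]_(u in moves) (gval e n' (D :|: nbh e u) false)).+1
    else
      (\max_(u in moves) gval e n' (D :|: nbh e u) true).+1
  end.

Definition gtg (T : finType) (e : rel T) (S : {set T}) : nat :=
  gval e #|T| S true.
Definition gtg' (T : finType) (e : rel T) (S : {set T}) : nat :=
  gval e #|T| S false.

Definition tg_critical (T : finType) (e : rel T) : Prop :=
  forall v : T, gtg e [set v] < gtg e set0.

Definition optimal_first_move (T : finType) (e : rel T) (v d : T) : Prop :=
  ~~ (nbh e d \subset [set v]) /\
  gtg e [set v] = (gtg' e ([set v] :|: nbh e d)).+1.

From mathcomp Require Import all_boot all_order.
Import Order.TTheory.

Set Implicit Arguments.
Unset Strict Implicit.
Unset Printing Implicit Defensive.

(* Let u be a neighbour of v.  Since v already lies in N(u), Dominator's move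
   u on G|v leads to the same position G|N(u) as the move u on G, so
   gamma_tg(G) <= 1 + gamma'_tg(G|N(u)).  If u were optimal on G|v, the
   right-hand side would equal gamma_tg(G|v), contradicting criticality. *)

Section TotalDominationGame.
Variables (T : finType) (e : rel T).

Lemma card_setC_move (D : {set T}) (u : T) :
  ~~ (nbh e u \subset D) -> #|~: (D :|: nbh e u)| < #|~: D|.
Proof. by move=> u_legal; apply: proper_card; rewrite properC properUl. Qed.

Lemma gval_fuelS (n : nat) (D : {set T}) (b : bool) :
  #|~: D| <= n -> gval e n.+1 D b = gval e n D b.
Proof.
elim: n D b => [|n IHn] D b D_le.
  have -> : D = setT.
    apply/setP=> x; rewrite inE; apply: contraTT D_le => xD.
    by rewrite -ltnNge; apply/card_gt0P; exists x; rewrite inE.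
  by rewrite /=; case: ifP => // /set0Pn[x]; rewrite inE subsetT.
have IHmove u : u \in [set w | ~~ (nbh e w \subset D)] ->
    gval e n.+1 (D :|: nbh e u) (~~ b) = gval e n (D :|: nbh e u) (~~ b).
  rewrite inE => /card_setC_move u_shrinks.
  by apply: IHn; rewrite -ltnS (leq_trans u_shrinks).
rewrite [LHS]/= [RHS]/=; case: ifP => // _.
by case: b IHmove => IHmove; congr _.+1; apply: eq_bigr => u /IHmove.
Qed.

Lemma gtg_le_move (D : {set T}) (u : T) :
  ~~ (nbh e u \subset D) -> gtg e D <= (gtg' e (D :|: nbh e u)).+1.
Proof.
move=> u_legal; have [n cardT] : exists n, #|T| = n.+1.
  by exists #|T|.-1; rewrite prednK //; apply/card_gt0P; exists u.
have moves_u : u \in [set w | ~~ (nbh e w \subset D)] by rewrite inE.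
have Du_le : #|~: (D :|: nbh e u)| <= n.
  by rewrite -ltnS -cardT (leq_trans (card_setC_move u_legal)) ?max_card.
rewrite /gtg /gtg' cardT (gval_fuelS _ Du_le) /= ifN ?ltnS; last by apply/set0Pn; exists u.
exact: (bigmin_le_cond _ (fun w => gval e n (D :|: nbh e w) false) moves_u).
Qed.

End TotalDominationGame.

Theorem lemma4p4 (T : finType) (e : rel T) :
  simple_graph_noiso e -> tg_critical e ->
  forall v u : T, e v u -> ~ optimal_first_move e v u.
Proof.
move=> [e_sym _] e_critical v u vu [_ u_optimal].
have v_Nu : v \in nbh e u by rewrite inE e_sym.
have u_legal : ~~ (nbh e u \subset set0) by rewrite subset0; apply/set0Pn; exists v.
have := e_critical v; rewrite u_optimal (setUidPr _) ?sub1set //.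
by rewrite ltnNge -[nbh e u]set0U gtg_le_move.
Qed.
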